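(* Let $c\in\mathbb{R}^n$, $A\in\mathbb{R}^{m\times n}$, $b\in\mathbb{R}^m$ and $\emptyset\neq I\subseteq\{1,\dots,n\}$, and consider the binary mixed-integer linear problem $\min\{c^\top x : Ax\ge b,\ x_i\in\{0,1\} \text{ for } i\in I\}$. Let $X:=\{x\in\mathbb{R}^n : Ax\ge b,\ x_I\in[0,1]^I\}\neq\emptyset$, $Y:=\{0,1\}^I$, and consider $$\min_{x,y}\ \|x_I-y\|_1 \quad\text{s.t.}\quad x\in X,\ y\in Y. \qquad (\ast)$$ The idealized feasibility pump is the following method: take $x^0\in\arg\min\{c^\top x: x\in X\}$ and $y^0$ the componentwise rounding of $x^0_I$ to the nearest integer; for $k=0,1,\dots$ compute $x^{k+1}\in\arg\min_{x\in X}\|x_I-y^k\|_1$ (a global minimizer) and $y^{k+1}\in\arg\min_{y\in Y}\|x^{k+1}_I-y\|_1$ (i.e., a rounding of $x^{k+1}_I$), with ties in the $y$-step resolved by choosing the lexicographically minimal minimizer; stop as soon as the current iterate is a partial minimum of $(\ast)$ (no random perturbations are applied). Then the idealized feasibility pump terminates at a partial minimum $(x^*,y^* )$ of $(\ast)$ after a finite number of iterations. If this partial minimum satisfies $\|x^*_I-y^*\|_1=0$, then the point $(x^*,y^* )$ is feasible for the binary mixed-integer linear problem (i.e., $x^*$ is feasible for it).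
   Context: A point $(x^*,y^* )\in X\times Y$ is a partial minimum of $(\ast)$ if $\|x^*_I-y^*\|_1\le\|x_I-y^*\|_1$ for all $x\in X$ and $\|x^*_I-y^*\|_1\le \|x^*_I-y\|_1$ for all $y\in Y$. $x_I$ denotes the subvector of $x$ with components indexed by $I$. *)

From HB Require Import structures.
From mathcomp Require Import all_boot all_order all_algebra.
From mathcomp Require Import reals.
Set Implicit Arguments. Unset Strict Implicit. Unset Printing Implicit Defensive.
Import Order.TTheory GRing.Theory Num.Theory.
Local Open Scope ring_scope.

Section FP.
Variables (R : realType) (m n : nat).
Variables (A : 'M[R]_(m, n)) (b : 'cV[R]_m) (c : 'cV[R]_n) (I : {set 'I_n}).

Definition Ity := {i : 'I_n | i \in I}.

(* Y = {0,1}^I : binary vectors indexed by I (false = 0, true = 1). *)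
Definition Yvec := {ffun Ity -> bool}.

Definition inX (x : 'cV[R]_n) : Prop :=
  (forall j : 'I_m, b j 0 <= (A *m x) j 0) /\
  (forall i : 'I_n, i \in I -> 0 <= x i 0 <= 1).

Definition obj (x : 'cV[R]_n) : R := \sum_(i < n) c i 0 * x i 0.

Definition dist1 (x : 'cV[R]_n) (y : Yvec) : R :=
  \sum_(i : Ity) `|x (val i) 0 - (y i)%:R|.

Definition milp_feasible (x : 'cV[R]_n) : Prop :=
  (forall j : 'I_m, b j 0 <= (A *m x) j 0) /\
  (forall i : 'I_n, i \in I -> x i 0 = 0 \/ x i 0 = 1).

Definition partial_min (x : 'cV[R]_n) (y : Yvec) : Prop :=
  inX x /\
  (forall x', inX x' -> dist1 x y <= dist1 x' y) /\
  (forall y' : Yvec, dist1 x y <= dist1 x y').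

Definition lex_le (y y' : Yvec) : Prop :=
  y = y' \/
  exists i : Ity, y i = false /\ y' i = true /\
    (forall j : Ity, (val (val j) < val (val i))%N -> y j = y' j).

(* a run of the idealized feasibility pump (without perturbations),
   with the steps performed as long as no partial minimum was reached *)
Definition ifp_run (x : nat -> 'cV[R]_n) (y : nat -> Yvec) : Prop :=
  [/\
      inX (x 0%N) /\ (forall x', inX x' -> obj (x 0%N) <= obj x'),
      (forall i : Ity,
         `|x 0%N (val i) 0 - (y 0%N i)%:R| <= `|x 0%N (val i) 0 - (~~ y 0%N i)%:R|)
    & forall k : nat, (forall j, (j <= k)%N -> ~ partial_min (x j) (y j)) ->
      [/\
          inX (x k.+1),
          (forall x', inX x' -> dist1 (x k.+1) (y k) <= dist1 x' (y k)),
          (forall y' : Yvec, dist1 (x k.+1) (y k.+1) <= dist1 (x k.+1) y')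
        &
          (forall y' : Yvec, dist1 (x k.+1) y' <= dist1 (x k.+1) (y k.+1) ->
             lex_le (y k.+1) y')]].

End FP.

From HB Require Import structures.
From mathcomp Require Import all_boot all_order all_algebra.
From mathcomp Require Import boolp reals.
Set Implicit Arguments. Unset Strict Implicit. Unset Printing Implicit Defensive.
Import Order.TTheory Order.NatMonotonyTheory GRing.Theory Num.Theory.
Local Open Scope ring_scope.

(* Without perturbations, the pump decreases the value
   gap k := ||x^{k+1}_I - y^k||_1 = min_{x in X} ||x_I - y^k||_1 strictly at
   every step that does not land on a partial minimum: rounding can only lower
   the distance, and if the next projection onto X does not lower it further,
   the current pair is already a partial minimum.  Since gap k only depends on
   y^k, the iterates y^k are then pairwise distinct, which is impossible in the
   finite set Y = {0,1}^I. *)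

Lemma nat_fin_not_injective (T : finType) (s : nat -> T) : ~ injective s.
Proof.
move=> s_inj.
have := leq_card (fun i : 'I_#|T|.+1 => s i) (fun i j eq_s => val_inj (s_inj _ _ eq_s)).
by rewrite card_ord ltnn.
Qed.

Lemma strictly_decreasing_inj (d : Order.disp_t) (T : porderType d) (f : nat -> T) :
  (forall i, f i.+1 < f i)%O -> injective f.
Proof.
move=> /nhomo_ltn_lt f_dec i j eq_f.
by case: (ltngtP i j) => // /f_dec; rewrite eq_f ltxx.
Qed.

Section FeasibilityPump.
Variables (R : realType) (m n : nat).
Variables (A : 'M[R]_(m, n)) (b : 'cV[R]_m) (I : {set 'I_n}).

Lemma dist1_eq0 (x : 'cV[R]_n) (y : Yvec I) :
  dist1 x y = 0 -> forall i : Ity I, x (val i) 0 = (y i)%:R.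
Proof.
move=> /eqP; rewrite psumr_eq0 => [/allP d0 i|i _]; last exact: normr_ge0.
by apply/eqP; rewrite -subr_eq0 -normr_eq0; apply: d0 (mem_index_enum _).
Qed.

Lemma milp_feasible_dist1_eq0 (x : 'cV[R]_n) (y : Yvec I) :
  inX A b I x -> dist1 x y = 0 -> milp_feasible A b I x.
Proof.
move=> [Axb _] /dist1_eq0 x_y; split=> // i iI.
by rewrite (x_y (exist _ i iI)); case: (y _); [right | left].
Qed.

Section Descent.
Variables (x : nat -> 'cV[R]_n) (y : nat -> Yvec I).
Hypothesis x_inX : forall k, inX A b I (x k.+1).
Hypothesis x_opt :
  forall k x', inX A b I x' -> dist1 (x k.+1) (y k) <= dist1 x' (y k).
Hypothesis y_opt : forall k (y' : Yvec I), dist1 (x k.+1) (y k.+1) <= dist1 (x k.+1) y'.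

Definition pump_gap k := dist1 (x k.+1) (y k).

Lemma pump_gap_eq i k : y i = y k -> pump_gap i = pump_gap k.
Proof.
rewrite /pump_gap => eq_y; apply/le_anti/andP; split.
- by have := x_opt i (x_inX k); rewrite eq_y.
- by have := x_opt k (x_inX i); rewrite -eq_y.
Qed.

Lemma pump_gap_decreasing k :
  ~ partial_min A b (x k.+1) (y k.+1) -> pump_gap k.+1 < pump_gap k.
Proof.
move=> no_pmin; have round_le : dist1 (x k.+1) (y k.+1) <= pump_gap k by apply: y_opt.
apply: lt_le_trans round_le; rewrite ltNge; apply/negP => proj_ge.
apply: no_pmin; split; [exact: x_inX | split; last exact: y_opt].
by move=> x' x'X; apply: le_trans proj_ge (x_opt _ x'X).
Qed.

End Descent.

Lemma ifp_run_partial_min (c : 'cV[R]_n) (x : nat -> 'cV[R]_n) (y : nat -> Yvec I) :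
  ifp_run A b c x y -> exists k, partial_min A b (x k) (y k).
Proof.
move=> [_ _ run]; apply/not_existsP => no_pmin.
have step k := run k (fun j _ => no_pmin j).
have x_inX k : inX A b I (x k.+1) by case: (step k).
have x_opt k : forall x', inX A b I x' -> dist1 (x k.+1) (y k) <= dist1 x' (y k).
  by case: (step k).
have y_opt k : forall y' : Yvec I, dist1 (x k.+1) (y k.+1) <= dist1 (x k.+1) y'.
  by case: (step k).
have gap_inj : injective (pump_gap x y).
  by apply: strictly_decreasing_inj => k; apply: (pump_gap_decreasing x_inX x_opt y_opt).
by apply: (@nat_fin_not_injective _ y) => i k /(pump_gap_eq x_inX x_opt) /gap_inj.
Qed.

End FeasibilityPump.

Theorem mainTheorem2 (R : realType) (m n : nat)
    (A : 'M[R]_(m, n)) (b : 'cV[R]_m) (c : 'cV[R]_n) (I : {set 'I_n})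
    (x : nat -> 'cV[R]_n) (y : nat -> Yvec I) :
  I != set0 ->
  (exists x0 : 'cV[R]_n, inX A b I x0) ->
  ifp_run A b c x y ->
  exists K : nat,
    (forall j, (j < K)%N -> ~ partial_min A b (x j) (y j)) /\
    partial_min A b (x K) (y K) /\
    (dist1 (x K) (y K) = 0 -> milp_feasible A b I (x K)).
Proof.
move=> _ _ /ifp_run_partial_min [k pmin_k].
have ex_pmin : exists k, `[< partial_min A b (x k) (y k) >] by exists k; apply/asboolP.
case: (ex_minnP ex_pmin) => K /asboolP pmin_K first_K.
exists K; split; [| split=> //].
- by move=> j ltjK /asboolP /first_K; rewrite leqNgt ltjK.
- by case: pmin_K => K_inX _; apply: milp_feasible_dist1_eq0.
Qed.
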